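(* Let $\Omega\subset\mathbb{R}^n$ be a bounded open set, let $f:\Omega\to\mathbb{R}$ be a bounded function, and let $\lambda>0$. Define the extensions $f^{-}_{\overline\Omega},f^{+}_{\overline\Omega}:\overline\Omega\to\mathbb{R}$ and $f^{-}_{\mathbb{R}^n},f^{+}_{\mathbb{R}^n}:\mathbb{R}^n\to\mathbb{R}$ by $f^{\pm}_{\overline\Omega}(x)=f(x)$ for $x\in\Omega$, $f^{-}_{\overline\Omega}(x)=\inf_\Omega f$ and $f^{+}_{\overline\Omega}(x)=\sup_\Omega f$ for $x\in\partial\Omega$; $f^{\pm}_{\mathbb{R}^n}(x)=f(x)$ for $x\in\Omega$, $f^{-}_{\mathbb{R}^n}(x)=\inf_\Omega f$ and $f^{+}_{\mathbb{R}^n}(x)=\sup_\Omega f$ for $x\in\mathbb{R}^n\setminus\Omega$. Then for every $x\in\overline\Omega$: $$M_{\lambda,\Omega}(f^{-}_{\overline\Omega})(x)=M_\lambda(f^{-}_{\mathbb{R}^n})(x),\qquad M^{\lambda}_{\Omega}(f^{+}_{\overline\Omega})(x)=M^{\lambda}(f^{+}_{\mathbb{R}^n})(x),$$ $$M^{\lambda}_{\Omega}(M_{\lambda,\Omega}(f^{-}_{\overline\Omega}))(x)=M^{\lambda}(M_{\lambda}(f^{-}_{\mathbb{R}^n}))(x),\qquad M_{\lambda,\Omega}(M^{\lambda}_{\Omega}(f^{+}_{\overline\Omega}))(x)=M_{\lambda}(M^{\lambda}(f^{+}_{\mathbb{R}^n}))(x),$$ and consequently $$C^l_{\lambda,\Omega}(f^{-}_{\overline\Omega})(x)=C^l_\lambda(f^{-}_{\mathbb{R}^n})(x),\qquad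 C^u_{\lambda,\Omega}(f^{+}_{\overline\Omega})(x)=C^u_\lambda(f^{+}_{\mathbb{R}^n})(x).$$ Moreover, with $O_f=\sup_\Omega f-\inf_\Omega f$: (i) If $x\in\Omega$ satisfies $\mathrm{dist}^2(x,\partial\Omega)>O_f/\lambda$ and $z_x\in\overline\Omega$ satisfies $M_{\lambda,\Omega}(f^{-}_{\overline\Omega})(x)=f^{-}_{\overline\Omega}(z_x)+\lambda|z_x-x|^2$ [respectively $M^{\lambda}_{\Omega}(f^{+}_{\overline\Omega})(x)=f^{+}_{\overline\Omega}(z_x)-\lambda|z_x-x|^2$], then $z_x\in\Omega$. (ii) If $x\in\Omega$ satisfies $\mathrm{dist}^2(x,\partial\Omega)>4O_f/\lambda$ and $z_x\in\overline\Omega$ satisfies $M^{\lambda}_{\Omega}(M_{\lambda,\Omega}(f^{-}_{\overline\Omega}))(x)=M_{\lambda,\Omega}(f^{-}_{\overline\Omega})(z_x)-\lambda|z_x-x|^2$ [respectively $M_{\lambda,\Omega}(M^{\lambda}_{\Omega}(f^{+}_{\overline\Omega}))(x)=M^{\lambda}_{\Omega}(f^{+}_{\overline\Omega})(z_x)+\lambda|z_x-x|^2$], then $z_x\in\Omega$, and any $y_x\in\overline\Omega$ with $M_{\lambda,\Omega}(f^{-}_{\overline\Omega})(z_x)=f^{-}_{\overline\Omega}(y_x)+\lambda|y_x-z_x|^2$ [respectively $M^{\lambda}_{\Omega}(f^{+}_{\overline\Omega})(z_x)=f^{+}_{\overline\Omega}(y_x)-\lambda|y_x-z_x|^2$] satisfies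 $y_x\in\Omega$.
   Context: For a bounded $g:\mathbb{R}^n\to\mathbb{R}$ and $\lambda>0$, the lower and upper Moreau envelopes are $M_\lambda(g)(x)=\inf_{y\in\mathbb{R}^n}\{g(y)+\lambda|y-x|^2\}$ and $M^\lambda(g)(x)=\sup_{y\in\mathbb{R}^n}\{g(y)-\lambda|y-x|^2\}$. For bounded $g:\overline\Omega\to\mathbb{R}$ and $x\in\overline\Omega$, $M_{\lambda,\Omega}(g)(x)=\inf_{y\in\overline\Omega}\{g(y)+\lambda|y-x|^2\}$ and $M^{\lambda}_{\Omega}(g)(x)=\sup_{y\in\overline\Omega}\{g(y)-\lambda|y-x|^2\}$. $\mathrm{co}[h]$ denotes the convex envelope (largest convex function below $h$). The compensated convex transforms are $C^l_\lambda(g)(x)=\mathrm{co}[g+\lambda|\cdot|^2](x)-\lambda|x|^2$ and $C^u_\lambda(g)(x)=\lambda|x|^2-\mathrm{co}[\lambda|\cdot|^2-g](x)$, and the local ones are $C^l_{\lambda,\Omega}(g)=M^{\lambda}_{\Omega}(M_{\lambda,\Omega}(g))$ and $C^u_{\lambda,\Omega}(g)=M_{\lambda,\Omega}(M^{\lambda}_{\Omega}(g))$ on $\overline\Omega$. $\mathrm{dist}(x,A)=\inf_{y\in A}|x-y|$. *)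

(* R^n is modelled as row vectors 'rV[R]_n with the
   product topology (equivalent to the Euclidean one); the Euclidean norm is
   written out explicitly. *)
From HB Require Import structures.
From mathcomp Require Import all_boot all_order all_algebra.
From mathcomp Require Import all_classical all_reals all_analysis.
Set Implicit Arguments. Unset Strict Implicit. Unset Printing Implicit Defensive.
Import Order.TTheory GRing.Theory Num.Theory.
Import numFieldNormedType.Exports.
Local Open Scope classical_set_scope.
Local Open Scope ring_scope.

Section Defs.
Variables (R : realType) (n : nat).
Notation V := 'rV[R]_n.

Definition sqn (v : V) : R := \sum_(i < n) (v ord0 i) ^+ 2.
Definition enorm (v : V) : R := Num.sqrt (sqn v).

Definition eucl_dist (x : V) (A : set V) : R := inf [set enorm (x - y) | y in A].

(* lower / upper Moreau envelopes with the infimum/supremum taken over A;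
   A = setT gives M_lambda, M^lambda; A = closure Omega gives the local ones *)
Definition Mlow (lam : R) (A : set V) (g : V -> R) (x : V) : R :=
  inf [set g y + lam * sqn (y - x) | y in A].
Definition Mup (lam : R) (A : set V) (g : V -> R) (x : V) : R :=
  sup [set g y - lam * sqn (y - x) | y in A].

Definition convex_fun (c : V -> R) : Prop :=
  forall (x y : V) (t : R), 0 <= t <= 1 ->
    c (t *: x + (1 - t) *: y) <= t * c x + (1 - t) * c y.
Definition co (h : V -> R) (x : V) : R :=
  sup [set c x | c in [set c : V -> R | convex_fun c /\ (forall y, c y <= h y)]].

Definition Cl (lam : R) (g : V -> R) (x : V) : R :=
  co (fun y => g y + lam * sqn y) x - lam * sqn x.
Definition Cu (lam : R) (g : V -> R) (x : V) : R :=
  lam * sqn x - co (fun y => lam * sqn y - g y) x.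
Definition Cl_loc (lam : R) (O : set V) (g : V -> R) : V -> R :=
  Mup lam (closure O) (Mlow lam (closure O) g).
Definition Cu_loc (lam : R) (O : set V) (g : V -> R) : V -> R :=
  Mlow lam (closure O) (Mup lam (closure O) g).

(* extensions of f outside Omega by inf_Omega f / sup_Omega f.  The same formula
   gives f^-_{closure Omega} (restricted to closure Omega) and f^-_{R^n}. *)
Definition ext_minus (O : set V) (f : V -> R) (x : V) : R :=
  if x \in O then f x else inf (f @` O).
Definition ext_plus (O : set V) (f : V -> R) (x : V) : R :=
  if x \in O then f x else sup (f @` O).

Definition osc (O : set V) (f : V -> R) : R := sup (f @` O) - inf (f @` O).

End Defs.

From HB Require Import structures.
From mathcomp Require Import all_boot all_order all_algebra.
From mathcomp Require Import all_classical all_reals all_analysis.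
From mathcomp Require Import ring lra.
Set Implicit Arguments. Unset Strict Implicit. Unset Printing Implicit Defensive.
Import Order.TTheory GRing.Theory Num.Theory.
Import numFieldNormedType.Exports.
Local Open Scope classical_set_scope.
Local Open Scope ring_scope.

(* Outside Om the extension f^- takes its least value inf f.  A competitor y outside
   closure Om in the lower envelope at x in closure Om may therefore be replaced by the
   point where the segment [x, y] leaves closure Om: same value, smaller distance to x.
   So the envelopes over closure Om and over R^n agree, and M_lam(f^-), which again
   lies between inf f and sup f and equals inf f outside Om, passes the argument on to
   the upper envelope.  For bounded g, C^l_lam(g) = M^lam(M_lam(g)): a convex minorant
   c of g + lam |.|^2 has a subgradient at every point, and the resulting affine
   minorant of g + lam |.|^2 is, after subtracting lam |.|^2, a downward paraboloid
   below g.  For (i) and (ii), a minimiser outside Om has value at least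
   inf f + lam dist^2, which exceeds the value sup f available at x.  The upper
   statements follow by passing to -f. *)

Section MoreauEnvelopes.
Variables (R : realType) (n : nat).
Notation V := 'rV[R]_n.
Implicit Types (g : V -> R) (A : set V) (lam b : R).

Lemma sqn_ge0 (v : V) : 0 <= sqn v.
Proof. by apply: sumr_ge0 => i _; exact: sqr_ge0. Qed.

Lemma sqn0 : sqn (0 : V) = 0.
Proof. by rewrite /sqn big1 // => i _; rewrite mxE expr0n. Qed.

Lemma sqn_subC (v w : V) : sqn (v - w) = sqn (w - v).
Proof. by apply: eq_bigr => i _; rewrite !mxE -sqrrN opprB. Qed.

Lemma sqnZ (a : R) (v : V) : sqn (a *: v) = a ^+ 2 * sqn v.
Proof. by rewrite /sqn mulr_sumr; apply: eq_bigr => i _; rewrite mxE exprMn. Qed.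

Lemma sqnD_le (v w : V) : sqn (v + w) <= 2 * sqn v + 2 * sqn w.
Proof.
rewrite /sqn !mulr_sumr -big_split /=; apply: ler_sum => i _; rewrite !mxE.
have := sqr_ge0 (v ord0 i - w ord0 i); nra.
Qed.

Lemma sqr_enorm (v : V) : enorm v ^+ 2 = sqn v.
Proof. by rewrite /enorm sqr_sqrtr // sqn_ge0. Qed.

Lemma sqr_eucl_dist_le (x z : V) A : A z -> eucl_dist x A ^+ 2 <= sqn (z - x).
Proof.
move=> Az.
have norm_ge0 : lbound [set enorm (x - y) | y in A] 0.
  by move=> _ [y _ <-]; exact: sqrtr_ge0.
have dist_ge0 : 0 <= eucl_dist x A.
  by apply: lb_le_inf => //; exists (enorm (x - z)), z.
have dist_le : eucl_dist x A <= enorm (x - z).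
  by apply: ge_inf; [exists 0 | exists z].
by rewrite sqn_subC -sqr_enorm !expr2 ler_pM.
Qed.

Lemma Mlow_le lam A g b x y : 0 <= lam -> (forall z, A z -> b <= g z) -> A y ->
  Mlow lam A g x <= g y + lam * sqn (y - x).
Proof.
move=> lam_ge0 g_ge Ay; apply: ge_inf; last by exists y.
exists b => _ [z Az <-]; rewrite -[b]addr0 lerD ?g_ge //.
exact: mulr_ge0 (sqn_ge0 _).
Qed.

Lemma Mlow_ge lam A g b x : A !=set0 ->
  (forall z, A z -> b <= g z + lam * sqn (z - x)) -> b <= Mlow lam A g x.
Proof.
move=> [y Ay] g_ge; apply: lb_le_inf; first by exists (g y + lam * sqn (y - x)), y.
by move=> _ [z Az <-]; exact: g_ge.
Qed.

Lemma Mup_ge lam A g b x y : 0 <= lam -> (forall z, A z -> g z <= b) -> A y ->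
  g y - lam * sqn (y - x) <= Mup lam A g x.
Proof.
move=> lam_ge0 g_le Ay; apply: ub_le_sup; last by exists y.
exists b => _ [z Az <-]; rewrite -[b]subr0 lerB ?g_le //.
exact: mulr_ge0 (sqn_ge0 _).
Qed.

Lemma Mup_le lam A g b x : A !=set0 ->
  (forall z, A z -> g z - lam * sqn (z - x) <= b) -> Mup lam A g x <= b.
Proof.
move=> [y Ay] g_le; apply: ge_sup; first by exists (g y - lam * sqn (y - x)), y.
by move=> _ [z Az <-]; exact: g_le.
Qed.

Lemma Mlow_le_self lam A g b y : 0 <= lam -> (forall z, A z -> b <= g z) -> A y ->
  Mlow lam A g y <= g y.
Proof.
by move=> lam_ge0 g_ge Ay; have := Mlow_le y lam_ge0 g_ge Ay; rewrite subrr sqn0 mulr0 addr0.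
Qed.

Lemma Mup_ge_self lam A g b y : 0 <= lam -> (forall z, A z -> g z <= b) -> A y ->
  g y <= Mup lam A g y.
Proof.
by move=> lam_ge0 g_le Ay; have := Mup_ge y lam_ge0 g_le Ay; rewrite subrr sqn0 mulr0 subr0.
Qed.

Lemma Mlow_lb lam A g b x : 0 <= lam -> A !=set0 -> (forall z, A z -> b <= g z) ->
  b <= Mlow lam A g x.
Proof.
move=> lam_ge0 A_ne g_ge; apply: Mlow_ge => // z Az.
by rewrite -[b]addr0 lerD ?g_ge // mulr_ge0 // sqn_ge0.
Qed.

Lemma MlowN lam A g x : Mlow lam A (fun y => - g y) x = - Mup lam A g x.
Proof.
rewrite /Mlow /Mup /inf; congr (- sup _); rewrite image_comp.
by apply: eq_imagel => y _ /=; rewrite opprD opprK.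
Qed.

Lemma MupN lam A g x : Mup lam A (fun y => - g y) x = - Mlow lam A g x.
Proof.
rewrite -[in RHS](_ : (fun y => - - g y) = g); last by apply: funext => y; rewrite opprK.
by rewrite MlowN opprK.
Qed.

Lemma eq_Mup lam A g1 g2 x : (forall z, A z -> g1 z = g2 z) ->
  Mup lam A g1 x = Mup lam A g2 x.
Proof. by move=> eq_g; rewrite /Mup; congr sup; apply: eq_imagel => z Az; rewrite eq_g. Qed.

Lemma Mlow_MupN lam A g x :
  Mlow lam A (Mup lam A g) x = - Mup lam A (Mlow lam A (fun y => - g y)) x.
Proof.
rewrite (_ : Mlow lam A (fun y => - g y) = fun y => - Mup lam A g y) ?MupN ?opprK //.
by apply: funext => y; rewrite MlowN.
Qed.

End MoreauEnvelopes.

Section Subgradient.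
Variables (R : realType) (n : nat).
Notation V := 'rV[R]_n.

Definition dot (p v : V) : R := \sum_i p ord0 i * v ord0 i.

Lemma dotDl (p q v : V) : dot (p + q) v = dot p v + dot q v.
Proof. by rewrite /dot -big_split; apply: eq_bigr => i _; rewrite !mxE mulrDl. Qed.

Lemma dotZl (a : R) (p v : V) : dot (a *: p) v = a * dot p v.
Proof. by rewrite /dot mulr_sumr; apply: eq_bigr => i _; rewrite !mxE mulrA. Qed.

Lemma dot0l (v : V) : dot 0 v = 0.
Proof. by rewrite /dot big1 // => i _; rewrite mxE mul0r. Qed.

Lemma dotr0 (p : V) : dot p 0 = 0.
Proof. by rewrite /dot big1 // => i _; rewrite mxE mulr0. Qed.

Lemma dot_delta (i : 'I_n) (v : V) : dot (delta_mx ord0 i) v = v ord0 i.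
Proof.
rewrite /dot (bigD1 i) //= big1 ?addr0; first by rewrite mxE !eqxx mul1r.
by move=> j /negbTE j_neq; rewrite mxE j_neq andbF mul0r.
Qed.

Lemma convex_fun_sub_dot (c : V -> R) (p x : V) :
  convex_fun c -> convex_fun (fun z => c z - dot p (z - x)).
Proof.
move=> c_cvx a b t t01.
have -> : dot p (t *: a + (1 - t) *: b - x) = t * dot p (a - x) + (1 - t) * dot p (b - x).
  by rewrite /dot !mulr_sumr -big_split /=; apply: eq_bigr => i _; rewrite !mxE; ring.
have := c_cvx a b t t01; lra.
Qed.

Definition agree_from (k : nat) (x z : V) := forall i : 'I_n, (k <= i)%N -> z ord0 i = x ord0 i.

Section Step.
Variables (psi : V -> R) (x : V) (k : 'I_n).
Hypotheses (psi_cvx : convex_fun psi)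
  (psi_min : forall w, agree_from k x w -> psi x <= psi w).

(* The point of [a, b] whose k-th coordinate is x_k lies on the slice where x minimises psi. *)
Lemma agree_from_chord a b s t : agree_from k.+1 x a -> agree_from k.+1 x b ->
  a ord0 k = x ord0 k + t -> b ord0 k = x ord0 k - s -> 0 < s -> 0 < t ->
  (s + t) * psi x <= s * psi a + t * psi b.
Proof.
move=> a_agree b_agree ak bk s_gt0 t_gt0.
have st_gt0 : 0 < s + t by rewrite addr_gt0.
have st_neq0 : s + t != 0 by rewrite gt_eqF.
pose tau := s / (s + t).
have tau01 : 0 <= tau <= 1.
  by rewrite /tau divr_ge0 ?(ltW s_gt0) ?(ltW st_gt0) //= ler_pdivrMr // mul1r lerDl ltW.
have w_agree : agree_from k x (tau *: a + (1 - tau) *: b).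
  move=> i ki; rewrite !mxE; case: (ltnP k i) => [lt_ki|le_ik].
    by rewrite a_agree // b_agree //; ring.
  have -> : i = k by apply/val_inj/eqP; rewrite eqn_leq le_ik ki.
  by rewrite ak bk /tau; field.
have := psi_min w_agree; have := psi_cvx a b tau01 => cvx_w min_w.
have e_a : (s + t) * tau = s by rewrite /tau; field.
have e_b : (s + t) * (1 - tau) = t by rewrite /tau; field.
have := ler_wpM2l (ltW st_gt0) (le_trans min_w cvx_w).
by rewrite mulrDr (mulrA (s + t) tau) (mulrA (s + t) (1 - tau)) e_a e_b.
Qed.

Lemma agree_from_subgradient_step : exists q,
  forall z, agree_from k.+1 x z -> psi x + q * (z ord0 k - x ord0 k) <= psi z.
Proof.
pose slope z := (psi z - psi x) / (z ord0 k - x ord0 k).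
have slope_le a b : agree_from k.+1 x a -> agree_from k.+1 x b ->
    b ord0 k < x ord0 k -> x ord0 k < a ord0 k -> slope b <= slope a.
  move=> a_agree b_agree bk ak.
  have s_gt0 : 0 < x ord0 k - b ord0 k by rewrite subr_gt0.
  have t_gt0 : 0 < a ord0 k - x ord0 k by rewrite subr_gt0.
  have ak' : a ord0 k = x ord0 k + (a ord0 k - x ord0 k) by rewrite addrC subrK.
  have bk' : b ord0 k = x ord0 k - (x ord0 k - b ord0 k) by rewrite opprB addrC subrK.
  have := agree_from_chord a_agree b_agree ak' bk' s_gt0 t_gt0.
  have -> : slope b = (psi x - psi b) / (x ord0 k - b ord0 k).
    by rewrite /slope -(opprB (psi x)) -(opprB (x ord0 k)) invrN mulrNN.
  rewrite ler_pdivlMr // mulrAC ler_pdivrMr //; lra.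
pose e : V := delta_mx ord0 k.
have e_agree r : agree_from k.+1 x (x + r *: e).
  move=> i ki; rewrite !mxE.
  have /negbTE -> : i != k by apply: contraTneq ki => ->; rewrite ltnn.
  by rewrite andbF mulr0 addr0.
have e_k r : (x + r *: e) ord0 k = x ord0 k + r by rewrite !mxE !eqxx mulr1.
pose L := [set slope b | b in [set b | agree_from k.+1 x b /\ b ord0 k < x ord0 k]].
have L_ub : ubound L (slope (x + 1 *: e)).
  move=> _ [b [b_agree bk] <-].
  by apply: slope_le; rewrite // e_k ltrDl.
have L_ne : L !=set0.
  exists (slope (x + (-1) *: e)), (x + (-1) *: e) => //.
  by split; [exact: e_agree | rewrite e_k gtrDl ltrN10].
exists (sup L) => z z_agree.
have [zk|zk|zk] := ltgtP (z ord0 k) (x ord0 k).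
- have : slope z <= sup L by apply: ub_le_sup; [exists (slope (x + 1 *: e)) | exists z].
  by rewrite /slope ler_ndivrMr ?subr_lt0 //; lra.
- have : sup L <= slope z.
    by apply: ge_sup => // _ [b [b_agree bk] <-]; apply: slope_le.
  by rewrite /slope ler_pdivlMr ?subr_gt0 //; lra.
- rewrite zk subrr mulr0 addr0; apply: psi_min => i ki.
  case: (ltnP k i) => [/z_agree|le_ik] //.
  by have -> : i = k by apply/val_inj/eqP; rewrite eqn_leq le_ik ki.
Qed.

End Step.

Lemma convex_subgradient (c : V -> R) (x : V) : convex_fun c ->
  exists p, forall z, c x + dot p (z - x) <= c z.
Proof.
move=> c_cvx.
suff /(_ n (leqnn n)) [p p_sub] : forall k, (k <= n)%N ->
    exists p, forall z, agree_from k x z -> c x + dot p (z - x) <= c z.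
  by exists p => z; apply: p_sub => i; rewrite leqNgt ltn_ord.
elim=> [_|k IH lt_kn].
  exists 0 => z z_agree; have -> : z = x by apply/rowP => i; exact: z_agree.
  by rewrite dot0l addr0.
have [p p_sub] := IH (ltnW lt_kn).
pose psi z := c z - dot p (z - x).
have psi_x : psi x = c x by rewrite /psi subrr dotr0 subr0.
have psi_min w : agree_from k x w -> psi x <= psi w.
  by move=> /p_sub; rewrite psi_x /psi; lra.
have [q q_sub] :=
  @agree_from_subgradient_step psi x (Ordinal lt_kn) (convex_fun_sub_dot p x c_cvx) psi_min.
exists (p + q *: delta_mx ord0 (Ordinal lt_kn)) => z /q_sub.
by rewrite dotDl dotZl dot_delta !mxE psi_x /psi; lra.
Qed.

End Subgradient.

Section CompensatedConvexTransforms.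
Variables (R : realType) (n : nat).
Notation V := 'rV[R]_n.

Lemma sqn_convex_comb (a b y : V) t :
  sqn (t *: a + (1 - t) *: b) - sqn (y - (t *: a + (1 - t) *: b)) =
  t * (sqn a - sqn (y - a)) + (1 - t) * (sqn b - sqn (y - b)).
Proof.
rewrite /sqn -!sumrB !mulr_sumr -big_split /=; apply: eq_bigr => i _; rewrite !mxE; ring.
Qed.

Lemma sqn_sub_shift (x y z : V) :
  sqn (z - y) - sqn (y - x) = sqn z - 2 * dot y (z - x) - sqn x.
Proof.
rewrite /sqn /dot -!sumrB mulr_sumr -!sumrB; apply: eq_bigr => i _; rewrite !mxE; ring.
Qed.

(* [y |-> G z - lam |z - y|^2 + lam |y|^2] is affine for each z. *)
Lemma convex_Mup_add_sqn lam (G : V -> R) b : 0 <= lam -> (forall y, G y <= b) ->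
  convex_fun (fun x => Mup lam setT G x + lam * sqn x).
Proof.
move=> lam_ge0 G_le a c t /andP[t_ge0 t_le1].
have t'_ge0 : 0 <= 1 - t by rewrite subr_ge0.
set w := t *: a + (1 - t) *: c.
suff : Mup lam setT G w <= t * (Mup lam setT G a + lam * sqn a)
  + (1 - t) * (Mup lam setT G c + lam * sqn c) - lam * sqn w by lra.
apply: Mup_le => [|y _]; first by exists 0.
have G_le' z (_ : setT z) := G_le z.
have := ler_wpM2l t_ge0 (Mup_ge (y := y) a lam_ge0 G_le' I).
have := ler_wpM2l t'_ge0 (Mup_ge (y := y) c lam_ge0 G_le' I).
have := sqn_convex_comb a c y t; rewrite -/w; nra.
Qed.

Section Bounded.
Variables (lam : R) (g : V -> R) (m S : R).
Hypotheses (lam_gt0 : 0 < lam) (g_ge : forall y, m <= g y) (g_le : forall y, g y <= S).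

Let lam_ge0 : 0 <= lam. Proof. exact: ltW. Qed.
Let g_ge' z (_ : setT z) : m <= g z. Proof. exact: g_ge. Qed.

Lemma Mlow_setT_le y : Mlow lam setT g y <= g y.
Proof. exact: (Mlow_le_self (y := y) lam_ge0 g_ge' I). Qed.

Lemma Mup_Mlow_setT_le y : Mup lam setT (Mlow lam setT g) y <= g y.
Proof.
apply: Mup_le => [|z _]; first by exists y.
by have := (Mlow_le (y := y) z lam_ge0 g_ge' I); rewrite sqn_subC; lra.
Qed.

(* For a subgradient p of c at x, z |-> c x + p.(z - x) - lam |z|^2 lies below g and is a
   downward paraboloid with vertex p / (2 lam). *)
Lemma convex_minorant_le_Mup_Mlow (c : V -> R) x : convex_fun c ->
  (forall y, c y <= g y + lam * sqn y) ->
  c x - lam * sqn x <= Mup lam setT (Mlow lam setT g) x.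
Proof.
move=> c_cvx c_le; have [p p_sub] := convex_subgradient x c_cvx.
pose y := (2 * lam)^-1 *: p.
have dot_y w : 2 * lam * dot y w = dot p w.
  by rewrite /y dotZl mulrA mulfV ?mul1r // mulf_neq0 // gt_eqF.
have Mlow_y : c x - lam * sqn x + lam * sqn (y - x) <= Mlow lam setT g y.
  apply: Mlow_ge => [|z _]; first by exists 0.
  have := congr1 (fun r => lam * r) (sqn_sub_shift x y z).
  have := p_sub z; have := c_le z; have := dot_y (z - x); lra.
have G_le z (_ : setT z) : Mlow lam setT g z <= S := le_trans (Mlow_setT_le z) (g_le z).
have := (Mup_ge (y := y) x lam_ge0 G_le I); lra.
Qed.

Lemma Cl_Mup_Mlow x : Cl lam g x = Mup lam setT (Mlow lam setT g) x.
Proof.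
pose phi y := Mup lam setT (Mlow lam setT g) y + lam * sqn y.
suff co_phi : co (fun y => g y + lam * sqn y) x = phi x by rewrite /Cl co_phi /phi addrK.
have phi_cvx : convex_fun phi.
  exact: convex_Mup_add_sqn lam_ge0 (fun y => le_trans (Mlow_setT_le y) (g_le y)).
have phi_le y : phi y <= g y + lam * sqn y by rewrite lerD2r Mup_Mlow_setT_le.
apply/le_anti/andP; split.
  apply: ge_sup => [|_ [c [c_cvx c_le] <-]]; first by exists (phi x), phi.
  by have := convex_minorant_le_Mup_Mlow x c_cvx c_le; rewrite /phi; lra.
apply: ub_le_sup; last by exists phi.
by exists (g x + lam * sqn x) => _ [c [_ c_le] <-].
Qed.

End Bounded.

Lemma CuN lam (g : V -> R) x : Cu lam g x = - Cl lam (fun y => - g y) x.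
Proof.
rewrite /Cu /Cl opprB; congr (_ - _); congr co.
by apply: funext => y; rewrite addrC.
Qed.

End CompensatedConvexTransforms.

Section EnvelopesOverClosure.
Variables (R : realType) (n : nat) (Om : set 'rV[R]_n).
Hypothesis Om_open : open Om.

(* The last point of the segment [x, y] that lies in closure Om is a boundary point. *)
Lemma closure_exit_point x y : closure Om x -> ~ closure Om y ->
  exists2 b, (closure Om `\` Om) b & sqn (b - x) <= sqn (y - x).
Proof.
move=> cx ncy.
pose p t : 'rV[R]_n := x + t *: (y - x).
have p_cont : continuous p.
  by move=> t; apply: cvgD; [exact: cvg_cst | apply: cvgZl; exact: cvg_id].
pose T := [set t : R | 0 <= t <= 1 /\ closure Om (p t)].
have T0 : T 0 by split; [rewrite lexx ler01 | rewrite /p scale0r addr0].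
have T_sup : has_sup T by split; [exists 0 | exists 1 => t [/andP[]]].
pose ts := sup T.
have le_ts t : T t -> t <= ts by exact: (ub_le_sup T_sup.2).
have ts_ge0 : 0 <= ts := le_ts 0 T0.
have ts_le1 : ts <= 1 by apply: ge_sup => [|t [/andP[]]]; first by exists 0.
have cl_pts : closure Om (p ts).
  rewrite [X in X (p ts)](closure_id _).1; last exact: closed_closure.
  move=> P /p_cont /nbhs_ballP [e e_gt0 pe].
  have [t Tt lt_t] := sup_adherent e_gt0 T_sup.
  exists (p t); split; first by case: Tt.
  apply: pe; rewrite -ball_normE /= ger0_norm ?subr_ge0 ?le_ts // -/ts in lt_t *; lra.
have notO_pts : ~ Om (p ts).
  move=> O_pts; have /p_cont /nbhs_ballP [e /= e_gt0 pe] : nbhs (p ts) Om by exact: Om_open.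
  have lt_ts1 : ts < 1.
    rewrite lt_neqAle ts_le1 andbT; apply: contra_notN ncy => /eqP ts1.
    by apply: subset_closure; move: O_pts; rewrite /p ts1 scale1r addrC subrK.
  have [t' [lt_ts' t'_le t'_le1]] : exists t', [/\ ts < t', t' <= ts + e / 2 & t' <= 1].
    exists (Num.min (ts + e / 2) 1).
    by rewrite lt_min lt_ts1 ltrDl divr_gt0 // !ge_min !lexx ?orbT.
  suff /le_ts : T t' by rewrite leNgt lt_ts'.
  split; first by rewrite t'_le1 andbT (le_trans ts_ge0 (ltW lt_ts')).
  apply/subset_closure/pe; rewrite -ball_normE /= ltr0_norm ?subr_lt0 //.
  lra.
exists (p ts); first by split.
by rewrite /p addrC addKr sqnZ ler_piMl ?sqn_ge0 // expr_le1.
Qed.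

Variable lam : R.
Hypothesis lam_ge0 : 0 <= lam.

Lemma Mlow_closure_setT (g : 'rV[R]_n -> R) b c x : (forall y, b <= g y) ->
  (forall y, ~ Om y -> g y = c) -> closure Om x ->
  Mlow lam (closure Om) g x = Mlow lam setT g x.
Proof.
move=> g_ge g_out cx; have g_ge' A y (_ : A y) := g_ge y.
apply/le_anti/andP; split; apply: Mlow_ge => [|z]; try by exists x.
- move=> _; have [cz|ncz] := pselect (closure Om z); first exact: Mlow_le.
  have [w [cw nOw] le_wz] := closure_exit_point cx ncz.
  apply: le_trans (Mlow_le x lam_ge0 (g_ge' _) cw) _.
  rewrite g_out // g_out; last by move/subset_closure.
  by rewrite lerD2l ler_wpM2l.
- by move=> cz; apply: Mlow_le.
Qed.

Lemma Mup_closure_setT (g : 'rV[R]_n -> R) b c x : (forall y, g y <= b) ->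
  (forall y, ~ Om y -> g y = c) -> closure Om x ->
  Mup lam (closure Om) g x = Mup lam setT g x.
Proof.
move=> g_le g_out cx; apply: oppr_inj; rewrite -!MlowN.
by apply: (@Mlow_closure_setT _ (- b) (- c)) => // y; [rewrite lerN2 | move/g_out ->].
Qed.

End EnvelopesOverClosure.

Definition min_outside (R : realType) (n : nat) (Om : set 'rV[R]_n) (m S : R)
    (g : 'rV[R]_n -> R) :=
  [/\ forall y, m <= g y, forall y, g y <= S & forall y, ~ Om y -> g y = m].

Definition max_outside (R : realType) (n : nat) (Om : set 'rV[R]_n) (m S : R)
    (g : 'rV[R]_n -> R) :=
  [/\ forall y, m <= g y, forall y, g y <= S & forall y, ~ Om y -> g y = S].

Lemma max_outsideN (R : realType) (n : nat) (Om : set 'rV[R]_n) m S g :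
  max_outside Om m S g -> min_outside Om (- S) (- m) (fun y => - g y).
Proof. by case=> g_ge g_le g_out; split=> y; rewrite ?lerN2 // => /g_out ->. Qed.

Section MinOutside.
Variables (R : realType) (n : nat) (Om : set 'rV[R]_n) (m S lam : R) (g : 'rV[R]_n -> R).
Hypotheses (Om_open : open Om) (lam_gt0 : 0 < lam) (gP : min_outside Om m S g).

Let lam_ge0 : 0 <= lam. Proof. exact: ltW. Qed.
Let g_ge y : m <= g y. Proof. by case: gP. Qed.
Let g_le y : g y <= S. Proof. by case: gP. Qed.
Let g_out y : ~ Om y -> g y = m. Proof. by case: gP => _ _; apply. Qed.
Let g_ge_on {A : set 'rV[R]_n} y (_ : A y) : m <= g y. Proof. exact: g_ge. Qed.

Lemma min_outside_Mlow : min_outside Om m S (Mlow lam setT g).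
Proof.
have Mlow_ge_m y : m <= Mlow lam setT g y.
  by apply: Mlow_lb lam_ge0 _ (g_ge_on (A := setT)); exists y.
split=> // [y|y nOy]; first exact: le_trans (Mlow_setT_le lam_gt0 g_ge y) (g_le y).
by apply/le_anti; rewrite Mlow_ge_m -(g_out nOy) (Mlow_setT_le lam_gt0 g_ge).
Qed.

Lemma Mlow_closureE x : closure Om x -> Mlow lam (closure Om) g x = Mlow lam setT g x.
Proof. move=> cx; exact: (Mlow_closure_setT Om_open lam_ge0 g_ge g_out cx). Qed.

Lemma Mup_Mlow_closureE x : closure Om x ->
  Mup lam (closure Om) (Mlow lam (closure Om) g) x = Mup lam setT (Mlow lam setT g) x.
Proof.
move=> cx; rewrite (eq_Mup lam x Mlow_closureE).
case: min_outside_Mlow => _ G_le G_out.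
exact: (Mup_closure_setT Om_open lam_ge0 G_le G_out cx).
Qed.

Lemma Cl_locE x : closure Om x -> Cl_loc lam Om g x = Cl lam g x.
Proof. by move=> cx; rewrite /Cl_loc Mup_Mlow_closureE // (Cl_Mup_Mlow lam_gt0 g_ge g_le). Qed.

Lemma Mlow_closure_argmin_in x z : Om x ->
  (S - m) / lam < eucl_dist x (closure Om `\` Om) ^+ 2 -> closure Om z ->
  Mlow lam (closure Om) g x = g z + lam * sqn (z - x) -> Om z.
Proof.
move=> Ox; rewrite ltr_pdivrMr // => dist_gt cz min_z; apply: contrapT => nOz.
have := ler_wpM2l lam_ge0 (sqr_eucl_dist_le x (conj cz nOz : (closure Om `\` Om) z)).
have := Mlow_le_self lam_ge0 g_ge_on (subset_closure Ox).
by rewrite min_z g_out //; have := g_le x; lra.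
Qed.

Lemma Mup_Mlow_closure_argmax_in x z : Om x ->
  4 * (S - m) / lam < eucl_dist x (closure Om `\` Om) ^+ 2 -> closure Om z ->
  Mup lam (closure Om) (Mlow lam (closure Om) g) x
    = Mlow lam (closure Om) g z - lam * sqn (z - x) ->
  Om z /\ (forall y, closure Om y ->
             Mlow lam (closure Om) g z = g y + lam * sqn (y - z) -> Om y).
Proof.
move=> Ox; rewrite ltr_pdivrMr // => dist_gt cz max_z.
set G := Mlow lam (closure Om) g in max_z *.
have cx := subset_closure Ox.
have G_ge w : m <= G w by apply: Mlow_lb lam_ge0 _ g_ge_on; exists x.
have G_le w : closure Om w -> G w <= g w := Mlow_le_self lam_ge0 g_ge_on.
have G_le_S w (cw : closure Om w) : G w <= S := le_trans (G_le w cw) (g_le w).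
have := Mup_ge_self lam_ge0 G_le_S cx; rewrite max_z => G_x_le.
have m_le_S := le_trans (g_ge x) (g_le x).
have dist_le w : (closure Om `\` Om) w ->
    lam * eucl_dist x (closure Om `\` Om) ^+ 2 <= lam * sqn (w - x).
  by move=> Dw; rewrite ler_wpM2l // sqr_eucl_dist_le.
have Oz : Om z.
  apply: contrapT => nOz; have := dist_le z (conj cz nOz).
  by have := G_le z cz; rewrite g_out //; have := G_ge x; lra.
split=> // y cy min_y; apply: contrapT => nOy.
have := dist_le y (conj cy nOy).
have := ler_wpM2l lam_ge0 (sqnD_le (y - z) (z - x)); rewrite addrA subrK.
move: min_y; rewrite g_out // => min_y.
by have := G_le z cz; have := g_le z; have := G_ge x; lra.
Qed.

End MinOutside.

Section MaxOutside.
Variables (R : realType) (n : nat) (Om : set 'rV[R]_n) (m S lam : R) (g : 'rV[R]_n -> R).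
Hypotheses (Om_open : open Om) (lam_gt0 : 0 < lam) (gP : max_outside Om m S g).

Let gNP := max_outsideN gP.

Lemma Mup_closureE x : closure Om x -> Mup lam (closure Om) g x = Mup lam setT g x.
Proof. by move=> cx; apply: oppr_inj; rewrite -!MlowN (Mlow_closureE Om_open lam_gt0 gNP). Qed.

Lemma Mlow_Mup_closureE x : closure Om x ->
  Mlow lam (closure Om) (Mup lam (closure Om) g) x = Mlow lam setT (Mup lam setT g) x.
Proof. by move=> cx; rewrite !Mlow_MupN (Mup_Mlow_closureE Om_open lam_gt0 gNP). Qed.

Lemma Cu_locE x : closure Om x -> Cu_loc lam Om g x = Cu lam g x.
Proof. by move=> cx; rewrite /Cu_loc Mlow_MupN CuN -(Cl_locE Om_open lam_gt0 gNP). Qed.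

Lemma Mup_closure_argmax_in x z : Om x ->
  (S - m) / lam < eucl_dist x (closure Om `\` Om) ^+ 2 -> closure Om z ->
  Mup lam (closure Om) g x = g z - lam * sqn (z - x) -> Om z.
Proof.
move=> Ox dist_gt cz max_z.
apply: (Mlow_closure_argmin_in lam_gt0 gNP Ox _ cz); first by rewrite opprK addrC.
by rewrite MlowN max_z opprB addrC.
Qed.

Lemma Mlow_Mup_closure_argmin_in x z : Om x ->
  4 * (S - m) / lam < eucl_dist x (closure Om `\` Om) ^+ 2 -> closure Om z ->
  Mlow lam (closure Om) (Mup lam (closure Om) g) x
    = Mup lam (closure Om) g z + lam * sqn (z - x) ->
  Om z /\ (forall y, closure Om y ->
             Mup lam (closure Om) g z = g y - lam * sqn (y - z) -> Om y).
Proof.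
move=> Ox dist_gt cz min_z.
have [||Oz argmin_in] := Mup_Mlow_closure_argmax_in lam_gt0 gNP Ox _ cz.
- by rewrite opprK addrC.
- by apply: oppr_inj; rewrite -Mlow_MupN min_z MlowN; lra.
split=> // y cy max_y; apply: argmin_in cy _.
by rewrite MlowN max_y opprB addrC.
Qed.

End MaxOutside.

Section Extensions.
Variables (R : realType) (n : nat) (Om : set 'rV[R]_n) (f : 'rV[R]_n -> R).
Hypothesis f_bnd : exists M, forall x, Om x -> `|f x| <= M.

Lemma inf_image_le y : Om y -> inf (f @` Om) <= f y.
Proof.
have [M f_le] := f_bnd; move=> Oy; apply: ge_inf; last by exists y.
by exists (- M) => _ [z Oz <-]; have := f_le z Oz; rewrite ler_norml => /andP[].
Qed.

Lemma sup_image_ge y : Om y -> f y <= sup (f @` Om).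
Proof.
have [M f_le] := f_bnd; move=> Oy; apply: ub_le_sup; last by exists y.
by exists M => _ [z Oz <-]; have := f_le z Oz; rewrite ler_norml => /andP[].
Qed.

Lemma inf_image_le_sup : inf (f @` Om) <= sup (f @` Om).
Proof.
have [[y Oy]|Om0] := pselect (Om !=set0).
  exact: le_trans (inf_image_le Oy) (sup_image_ge Oy).
have -> : Om = set0 by apply/seteqP; split=> // y Oy; apply: Om0; exists y.
by rewrite image_set0 inf0 sup0.
Qed.

Lemma ext_minus_min_outside :
  min_outside Om (inf (f @` Om)) (sup (f @` Om)) (ext_minus Om f).
Proof.
rewrite /ext_minus; split=> [y|y|y nOy]; last by rewrite memNset.
  by case: ifPn => [/set_mem /inf_image_le|].
by case: ifPn => [/set_mem /sup_image_ge|_]; last exact: inf_image_le_sup.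
Qed.

Lemma ext_plus_max_outside :
  max_outside Om (inf (f @` Om)) (sup (f @` Om)) (ext_plus Om f).
Proof.
rewrite /ext_plus; split=> [y|y|y nOy]; last by rewrite memNset.
  by case: ifPn => [/set_mem /inf_image_le|_]; last exact: inf_image_le_sup.
by case: ifPn => [/set_mem /sup_image_ge|].
Qed.

End Extensions.

Theorem theorem3p1 (R : realType) (n : nat) (Om : set 'rV[R]_n)
    (f : 'rV[R]_n -> R) (lam : R) :
  open Om ->
  (exists M : R, forall x, Om x -> enorm x <= M) ->
  (exists M : R, forall x, Om x -> `|f x| <= M) ->
  0 < lam ->
  [/\
   (* the identities on closure Om *)
   forall x : 'rV[R]_n, closure Om x ->
     [/\ Mlow lam (closure Om) (ext_minus Om f) x = Mlow lam setT (ext_minus Om f) x,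
         Mup lam (closure Om) (ext_plus Om f) x = Mup lam setT (ext_plus Om f) x,
         Mup lam (closure Om) (Mlow lam (closure Om) (ext_minus Om f)) x
           = Mup lam setT (Mlow lam setT (ext_minus Om f)) x,
         Mlow lam (closure Om) (Mup lam (closure Om) (ext_plus Om f)) x
           = Mlow lam setT (Mup lam setT (ext_plus Om f)) x &
         (Cl_loc lam Om (ext_minus Om f) x = Cl lam (ext_minus Om f) x /\
         Cu_loc lam Om (ext_plus Om f) x = Cu lam (ext_plus Om f) x)],
   (* (i), lower case *)
   forall x z : 'rV[R]_n, Om x -> osc Om f / lam < (eucl_dist x (closure Om `\` Om)) ^+ 2 ->
     closure Om z ->
     Mlow lam (closure Om) (ext_minus Om f) x
       = ext_minus Om f z + lam * sqn (z - x) ->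
     Om z,
   (* (i), upper case *)
   forall x z : 'rV[R]_n, Om x -> osc Om f / lam < (eucl_dist x (closure Om `\` Om)) ^+ 2 ->
     closure Om z ->
     Mup lam (closure Om) (ext_plus Om f) x
       = ext_plus Om f z - lam * sqn (z - x) ->
     Om z,
   (* (ii), lower case *)
   forall x z : 'rV[R]_n, Om x -> 4 * osc Om f / lam < (eucl_dist x (closure Om `\` Om)) ^+ 2 ->
     closure Om z ->
     Mup lam (closure Om) (Mlow lam (closure Om) (ext_minus Om f)) x
       = Mlow lam (closure Om) (ext_minus Om f) z - lam * sqn (z - x) ->
     Om z /\
     (forall y : 'rV[R]_n, closure Om y ->
        Mlow lam (closure Om) (ext_minus Om f) z
          = ext_minus Om f y + lam * sqn (y - z) -> Om y) &
   (* (ii), upper case *)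
   forall x z : 'rV[R]_n, Om x -> 4 * osc Om f / lam < (eucl_dist x (closure Om `\` Om)) ^+ 2 ->
     closure Om z ->
     Mlow lam (closure Om) (Mup lam (closure Om) (ext_plus Om f)) x
       = Mup lam (closure Om) (ext_plus Om f) z + lam * sqn (z - x) ->
     Om z /\
     (forall y : 'rV[R]_n, closure Om y ->
        Mup lam (closure Om) (ext_plus Om f) z
          = ext_plus Om f y - lam * sqn (y - z) -> Om y)].
Proof.
move=> Om_open _ f_bnd lam_gt0.
have minusP := ext_minus_min_outside f_bnd.
have plusP := ext_plus_max_outside f_bnd.
rewrite /osc; split.
- move=> x cx; split; last split.
  + exact: (Mlow_closureE Om_open lam_gt0 minusP cx).
  + exact: (Mup_closureE Om_open lam_gt0 plusP cx).
  + exact: (Mup_Mlow_closureE Om_open lam_gt0 minusP cx).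
  + exact: (Mlow_Mup_closureE Om_open lam_gt0 plusP cx).
  + exact: (Cl_locE Om_open lam_gt0 minusP cx).
  + exact: (Cu_locE Om_open lam_gt0 plusP cx).
- by move=> x z Ox; apply: (Mlow_closure_argmin_in lam_gt0 minusP Ox).
- by move=> x z Ox; apply: (Mup_closure_argmax_in lam_gt0 plusP Ox).
- by move=> x z Ox; apply: (Mup_Mlow_closure_argmax_in lam_gt0 minusP Ox).
- by move=> x z Ox; apply: (Mlow_Mup_closure_argmin_in lam_gt0 plusP Ox).
Qed.
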